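(* Let $Q=\sum_{i\in[m]}q_i\mathrm B(\sigma_i)\in\mathbb B_m$ with $0\le\sigma_1<\cdots<\sigma_m\le1/2$, and let $W=\sum_{j\in[n]}p_j\mathrm B(\varepsilon_j)\in\mathbb B_n$ be a $2n$-P-degradation of $Q$ with all $p_j>0$ and $\sigma_1\le\varepsilon_1\le\varepsilon_2\le\cdots\le\varepsilon_n\le\sigma_m$. Let $(k_{i,j})_{m\times n}$ be a 1-matrix of pattern $(q_1,\dots,q_m;p_1,\dots,p_n)$ with $\sum_{i\in[m]}k_{i,j}\sigma_i=p_j\varepsilon_j$ for all $j\in[n]$. For a nonnegative $m\times n$ matrix $(\kappa_{i,j})$ with column sums $\pi_j=\sum_i\kappa_{i,j}$, write $W[\kappa]=\sum_{j:\pi_j>0}\pi_j\mathrm B\big(\pi_j^{-1}\sum_i\kappa_{i,j}\sigma_i\big)$. 1. If $k_{i',j'}\neq0$ for some $i'\in[m]$, $j'\in[n-1]$ with $\sigma_{i'}\ge\varepsilon_{j'+1}$, let $k'$ be obtained from $k$ by setting $k'_{i',j'}=0$, $k'_{i',j'+1}=k_{i',j'+1}+k_{i',j'}$ and leaving all other entries unchanged. Then $W'=W[k']$ satisfies $W\preccurlyeq_{\mathrm P}W'\preccurlyeq_{\mathrm P}Q$. 2. If $k_{i'',j''}\neq0$ for some $i''\in[m]$, $2\le j''\le n$ with $\sigma_{i''}\le\varepsilon_{j''-1}$, let $k''$ be obtained from $k$ by setting $k''_{i'',j''}=0$, $k''_{i'',j''-1}=k_{i'',j''-1}+k_{i'',j''}$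 and leaving all other entries unchanged. Then $W''=W[k'']$ satisfies $W\preccurlyeq_{\mathrm P}W''\preccurlyeq_{\mathrm P}Q$. 3. If $k_{i_*,j^*}k_{i^*,j_*}\neq0$ for some $i_*,i^*\in[m]$, $j_*,j^*\in[n]$ with $\varepsilon_{j_*}\le\sigma_{i_*}<\sigma_{i^*}\le\varepsilon_{j^*}$, let $\delta=\min\{k_{i_*,j^*},k_{i^*,j_*}\}$ and let $k^*$ be obtained from $k$ by subtracting $\delta$ from the entries $(i_*,j^* )$ and $(i^*,j_* )$, adding $\delta$ to the entries $(i_*,j_* )$ and $(i^*,j^* )$, and leaving all other entries unchanged. Then $W^*=W[k^*]$ satisfies $W\preccurlyeq_{\mathrm P}W^*\preccurlyeq_{\mathrm P}Q$.
   Context: A BIDMC $W$ has input uniform on $\{0,1\}$, discrete output alphabet $\mathcal Y$ and transition probabilities $\Pr(y\mid x)$; its LR-profile is $P_W(\varepsilon)=\Pr\big(\mathcal L_W(y)=\varepsilon/(1-\varepsilon)\big)$ with $\mathcal L_W(\hat y)=\Pr(y=\hat y\mid x=0)/\Pr(y=\hat y\mid x=1)$, and $W\cong W'$ if LR-profiles coincide; channel identities are up to $\cong$. $W'\preccurlyeq W$ if there is a channel $T$ from the output alphabet of $W$ to that of $W'$ with $\Pr(y'\mid x'=a)=\sum_{y}\Pr(y\mid x=a)T(y'\mid y)$. $\mathrm B(\varepsilon)$ is the BSC with crossover probability $\varepsilon$; $\sum_iq_iW_i$ (with $(q_i)$ a probability vector) denotes the random switching channel (use $W_i$ with probability $q_i$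 independently of the input and output the index $i$ along with the output). $\mathbb B_n$ is the set of BIDMCs equivalent to $\sum_{i\in[n]}p_i\mathrm B(\varepsilon_i)$ for a probability vector $(p_i)$ and $\varepsilon_i\in[0,1]$. $P_\epsilon(W)=\frac12\sum_{y}\min\{\Pr(y\mid x=0),\Pr(y\mid x=1)\}$. For a symmetric BIDMC $Q$ and $n\ge1$, $W$ is a $2n$-P-degradation of $Q$, written $W\preccurlyeq_{\mathrm P}Q$, if $W\in\mathbb B_n$, $W\preccurlyeq Q$ and $P_\epsilon(W)=\min\{P_\epsilon(W'):W'\in\mathbb B_n,\ W'\preccurlyeq Q\}$. A 1-matrix of pattern $(q_1,\dots,q_m;p_1,\dots,p_n)$ is a matrix $(k_{i,j})_{m\times n}$ with $k_{i,j}\ge0$, $\sum_{j}k_{i,j}=q_i$ for all $i$ and $\sum_{i}k_{i,j}=p_j$ for all $j$. *)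

From HB Require Import structures.
From mathcomp Require Import all_boot all_order all_algebra.
From mathcomp Require Import reals.
Set Implicit Arguments. Unset Strict Implicit. Unset Printing Implicit Defensive.
Import Order.TTheory GRing.Theory Num.Theory.
Local Open Scope ring_scope.

(* A binary-input channel: input false = 0, true = 1; finite output alphabet. *)
Record channel (R : Type) := Channel { out : finType; tp : bool -> out -> R }.
Arguments Channel {R} out tp.
Arguments tp {R} c _ _.
Arguments out {R} c.

Section Defs.
Variable R : realType.

Definition valid (W : channel R) : Prop :=
  (forall x y, 0 <= tp W x y) /\ (forall x, \sum_y tp W x y = 1).

(* LR-profile: P_W(e) = Pr(L_W(y) = e/(1-e)) with uniform input, where
   L_W(y) = Pr(y|0)/Pr(y|1); written without division. *)
Definition lr_profile (W : channel R) (e : R) : R :=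
  \sum_(y | tp W false y * (1 - e) == e * tp W true y)
     (tp W false y + tp W true y) / 2.

Definition ch_equiv (W W' : channel R) : Prop :=
  forall e, 0 <= e <= 1 -> lr_profile W e = lr_profile W' e.

Definition degraded (W' W : channel R) : Prop :=
  exists T : out W -> out W' -> R,
    (forall y y', 0 <= T y y') /\ (forall y, \sum_y' T y y' = 1) /\
    (forall a y', tp W' a y' = \sum_y tp W a y * T y y').

Definition bsc (e : R) (x y : bool) : R := if x == y then 1 - e else e.

Definition prob_vec (n : nat) (p : 'I_n -> R) : Prop :=
  (forall i, 0 <= p i) /\ \sum_i p i = 1.

Definition bsc_mix (n : nat) (p e : 'I_n -> R) : channel R :=
  Channel ('I_n * bool)%type (fun x iy => p iy.1 * bsc (e iy.1) x iy.2).

Definition in_B (n : nat) (W : channel R) : Prop :=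
  exists (p e : 'I_n -> R), prob_vec p /\ (forall i, 0 <= e i <= 1) /\
    ch_equiv W (bsc_mix p e).

Definition Perr (W : channel R) : R :=
  (\sum_y Num.min (tp W false y) (tp W true y)) / 2.

Definition symmetric (Q : channel R) : Prop :=
  exists f : out Q -> out Q, (forall y, f (f y) = y) /\
    (forall y, tp Q false y = tp Q true (f y)).

Definition Pdeg (n : nat) (W Q : channel R) : Prop :=
  (0 < n)%N /\ valid Q /\ symmetric Q /\ valid W /\ in_B n W /\ degraded W Q /\
  (forall W', valid W' -> in_B n W' -> degraded W' Q -> Perr W <= Perr W').

Definition colsum (m n : nat) (k : 'I_m -> 'I_n -> R) (j : 'I_n) : R :=
  \sum_i k i j.

Definition Wmat (m n : nat) (sigma : 'I_m -> R) (k : 'I_m -> 'I_n -> R)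
  : channel R :=
  Channel ({j : 'I_n | 0 < colsum k j} * bool)%type
    (fun x jy => let j := val jy.1 in
       colsum k j * bsc ((colsum k j)^-1 * \sum_i k i j * sigma i) x jy.2).

Definition move_entry (m n : nat) (k : 'I_m -> 'I_n -> R) (i0 : 'I_m) (a b : 'I_n)
  : 'I_m -> 'I_n -> R :=
  fun i j => if (i == i0) && (j == a) then 0
             else if (i == i0) && (j == b) then k i0 b + k i0 a
             else k i j.

Definition swap_entries (m n : nat) (k : 'I_m -> 'I_n -> R) (d : R)
  (i1 i2 : 'I_m) (j1 j2 : 'I_n) : 'I_m -> 'I_n -> R :=
  fun i j => k i j
    - (if (i == i1) && (j == j2) then d else 0)
    - (if (i == i2) && (j == j1) then d else 0)
    + (if (i == i1) && (j == j1) then d else 0)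
    + (if (i == i2) && (j == j2) then d else 0).

End Defs.

From Pilot Require Import Defs.
From HB Require Import structures.
From mathcomp Require Import all_boot all_order all_algebra.
From mathcomp Require Import reals.
From mathcomp Require Import ring lra.
Import Order.TTheory GRing.Theory Num.Theory.
Set Implicit Arguments. Unset Strict Implicit. Unset Printing Implicit Defensive.
Local Open Scope ring_scope.

(* W[kappa] merges the components of Q column by column, so for every nonnegative
   kappa with row sums q it is a valid symmetric channel of B_n degraded from Q.
   Each of the three operations changes only two columns jlo, jhi of k, keeps their
   total weight and total error mass, lowers the crossover of column jlo to at most
   min(eps_jlo, eps_jhi) and raises that of column jhi to at least their max.  The
   components p_jlo B(eps_jlo) and p_jhi B(eps_jhi) of W are therefore obtained by
   merging the two new components along an explicit 2x2 transport plan, so that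
   W <= W' <= Q.  As P_e is monotone under degradation, the optimality of W among
   the channels of B_n degraded from Q yields both W <=_P W' and W' <=_P Q. *)

Lemma sum_pair (R : nmodType) (A B : finType) (F : A * B -> R) :
  \sum_y F y = \sum_a \sum_b F (a, b).
Proof. by rewrite pair_bigA; apply: eq_bigr => -[]. Qed.

Lemma sum_two_points (R : nmodType) (I : finType) (a b : I) (F : I -> R) :
  a != b -> (forall i, i != a -> i != b -> F i = 0) -> \sum_i F i = F a + F b.
Proof.
move=> ab F0; rewrite (bigD1 a) //= (bigD1 b) 1?eq_sym //= big1 ?addr0 ?addrA //.
by move=> i /andP[ib ia]; apply: F0.
Qed.

Lemma sum_one_point (R : nmodType) (I : finType) (a : I) (F : I -> R) :
  (forall i, i != a -> F i = 0) -> \sum_i F i = F a.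
Proof. by move=> F0; rewrite (big_only1 a) // => i /F0. Qed.

Lemma sum_delta_sub (R : ringType) (I : finType) (c : R) (x y : I) :
  \sum_j c * ((j == x)%:R - (j == y)%:R) = 0.
Proof.
rewrite -mulr_sumr sumrB (sum_one_point (a := x)) => [|j /negbTE->] //.
by rewrite (sum_one_point (a := y)) => [|j /negbTE->] //; rewrite !eqxx subrr mulr0.
Qed.

Lemma mulVKf_le (R : realFieldType) (x y : R) : 0 <= y <= x -> x * (x^-1 * y) = y.
Proof.
case/andP=> y_ge0 y_le_x; have [x0|x_neq0] := eqVneq x 0; last exact: mulVKf.
have y0 : y = 0 by apply/le_anti; rewrite y_ge0 -x0 y_le_x.
by rewrite y0 !mulr0.
Qed.

Section Degradation.
Variable R : realType.
Implicit Types W : channel R.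

Lemma degraded_trans W1 W2 W3 : degraded W1 W2 -> degraded W2 W3 -> degraded W1 W3.
Proof.
case=> [T12 [T12_ge0 [T12_sum T12E]]] [T23 [T23_ge0 [T23_sum T23E]]].
exists (fun y3 y1 => \sum_y2 T23 y3 y2 * T12 y2 y1); split; [|split].
- by move=> y3 y1; apply: sumr_ge0 => y2 _; apply: mulr_ge0.
- move=> y3; rewrite exchange_big /= -(T23_sum y3); apply: eq_bigr => y2 _.
  by rewrite -mulr_sumr T12_sum mulr1.
- move=> a y1; rewrite T12E.
  under eq_bigr do rewrite T23E mulr_suml.
  rewrite exchange_big /=; apply: eq_bigr => y3 _.
  by rewrite mulr_sumr; apply: eq_bigr => y2 _; rewrite mulrA.
Qed.

Lemma Perr_degraded W W' : degraded W' W -> Perr W <= Perr W'.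
Proof.
case=> T [T_ge0 [T_sum TE]]; rewrite /Perr ler_pM2r ?invr_gt0 ?ltr0n //.
have -> : \sum_y Num.min (tp W false y) (tp W true y) =
    \sum_y' \sum_y Num.min (tp W false y) (tp W true y) * T y y'.
  by rewrite exchange_big; apply: eq_bigr => y _; rewrite -mulr_sumr T_sum mulr1.
apply: ler_sum => y' _; rewrite !TE le_min.
by apply/andP; split; apply: ler_sum => y _; apply: ler_wpM2r; rewrite ?ge_min ?lexx ?orbT.
Qed.

Lemma Pdeg_intermediate n W W' Q :
  Pdeg n W Q -> valid W' -> Defs.symmetric W' -> in_B n W' ->
  degraded W' Q -> degraded W W' -> Pdeg n W W' /\ Pdeg n W' Q.
Proof.
case=> [n_gt0 [vQ [sQ [vW [BW [WQ W_opt]]]]]] vW' sW' BW' W'Q WW'.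
split; do 6!split => //; move=> V vV BV VQ.
- exact: W_opt (degraded_trans VQ W'Q).
- exact: le_trans (Perr_degraded WW') (W_opt V vV BV VQ).
Qed.

End Degradation.

Section BscMixture.
Variable R : realType.

Lemma sum_bsc (e : R) x : \sum_y bsc e x y = 1.
Proof. by rewrite big_bool /bsc; case: x => /=; rewrite ?subrK // addrC subrK. Qed.

Lemma bsc_mix_valid n (p e : 'I_n -> R) :
  prob_vec p -> (forall j, 0 <= e j <= 1) -> valid (bsc_mix p e).
Proof.
move=> [p_ge0 p_sum] e01; split.
  move=> x [j y] /=; rewrite mulr_ge0 // /bsc.
  by case: (x == y); have /andP[] := e01 j; rewrite // subr_ge0.
move=> x; rewrite sum_pair -{}p_sum; apply: eq_bigr => j _ /=.
by rewrite -mulr_sumr sum_bsc mulr1.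
Qed.

Lemma bsc_mix_merge m n (q s : 'I_m -> R) (p e : 'I_n -> R)
    (K : 'I_m -> 'I_n -> R) :
  prob_vec p -> (forall i j, 0 <= K i j) ->
  (forall i, \sum_j K i j = q i) -> (forall j, \sum_i K i j = p j) ->
  (forall j, \sum_i K i j * s i = p j * e j) ->
  degraded (bsc_mix p e) (bsc_mix q s).
Proof.
move=> [p_ge0 p_sum] K_ge0 Krow Kcol Kerr.
have q_ge0 i : 0 <= q i by rewrite -Krow sumr_ge0.
pose c i j := if q i == 0 then p j else K i j / q i.
have qc i j : q i * c i j = K i j.
  rewrite /c; have [qi0|qi_neq0] := eqVneq (q i) 0; last by rewrite mulrCA divff ?mulr1.
  by rewrite qi0 mul0r (@psumr_eq0P _ _ xpredT (K i)) // Krow.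
exists (fun y y' => if y.2 == y'.2 then c y.1 y'.1 else 0); split; [|split].
- move=> [i b] [j b'] /=; case: ifP => // _; rewrite /c.
  by case: ifP => // _; rewrite divr_ge0.
- move=> [i b]; rewrite sum_pair /=.
  under eq_bigr do rewrite big_bool; rewrite /= /c; case: (q i =P 0) => [_|/eqP qi_neq0].
    by rewrite -p_sum; apply: eq_bigr => j; case: b; rewrite ?addr0 ?add0r.
  rewrite -[1](divff qi_neq0) -Krow mulr_suml; apply: eq_bigr => j _.
  by case: b; rewrite ?addr0 ?add0r.
- move=> a [j b'] /=; rewrite sum_pair.
  have term i : \sum_b q i * bsc (s i) a b * (if b == b' then c i j else 0) =
                K i j * bsc (s i) a b'.
    by rewrite big_bool -qc; case: b' => /=; rewrite mulr0 ?addr0 ?add0r mulrAC.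
  rewrite (eq_bigr _ (fun i _ => term i)) /bsc; case: (a == b'); last by rewrite -Kerr.
  by rewrite mulrBr mulr1 -Kerr -Kcol -sumrB; apply: eq_bigr => i _; rewrite mulrBr mulr1.
Qed.

End BscMixture.

Section MergedColumns.
Variables (R : realType) (m n : nat) (sigma : 'I_m -> R) (k : 'I_m -> 'I_n -> R).

Definition colerr (j : 'I_n) : R := \sum_i k i j * sigma i.
(* [colcross j = 0] on an empty column ([0^-1 = 0]); [Wmat] drops such columns. *)
Definition colcross (j : 'I_n) : R := (colsum k j)^-1 * colerr j.
Definition Wmix : channel R := bsc_mix (colsum k) colcross.

Hypothesis sigma01 : forall i, 0 <= sigma i <= 1.
Hypothesis k_ge0 : forall i j, 0 <= k i j.

Lemma colsum_ge0 j : 0 <= colsum k j.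
Proof. exact: sumr_ge0. Qed.

Lemma colerr_bounds j : 0 <= colerr j <= colsum k j.
Proof.
apply/andP; split; first by apply: sumr_ge0 => i _; rewrite mulr_ge0 //; case/andP: (sigma01 i).
by apply: ler_sum => i _; rewrite ler_piMr //; case/andP: (sigma01 i).
Qed.

Lemma colsum_mul_colcross j : colsum k j * colcross j = colerr j.
Proof. exact/mulVKf_le/colerr_bounds. Qed.

Lemma colcross_bounds j : 0 <= colcross j <= 1.
Proof.
have /andP[err_ge0 err_le] := colerr_bounds j.
rewrite /colcross; have [->|cs_neq0] := eqVneq (colsum k j) 0.
  by rewrite invr0 mul0r lexx ler01.
have cs_gt0 : 0 < colsum k j by rewrite lt_def cs_neq0 colsum_ge0.
by rewrite mulr_ge0 ?invr_ge0 ?colsum_ge0 //= mulrC ler_pdivrMr // mul1r.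
Qed.

Lemma tp_Wmix_null a j y : colsum k j = 0 -> tp Wmix a (j, y) = 0.
Proof. by move=> j_null; rewrite /Wmix /= j_null mul0r. Qed.

Lemma sum_nonnull_columns (F : 'I_n -> R) :
  (forall j, colsum k j = 0 -> F j = 0) ->
  \sum_(js : {j : 'I_n | 0 < colsum k j}) F (val js) = \sum_j F j.
Proof.
move=> F_null; rewrite -(big_sub [pred j | 0 < colsum k j]).
rewrite [RHS](bigID [pred j | 0 < colsum k j]) /=.
rewrite [X in _ = _ + X]big1 ?addr0 // => j; rewrite lt_def colsum_ge0 andbT negbK.
by move/eqP/F_null.
Qed.

Lemma sum_Wmat (g : R -> R -> R) : g 0 0 = 0 ->
  \sum_y g (tp (Wmat sigma k) false y) (tp (Wmat sigma k) true y) =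
  \sum_y g (tp Wmix false y) (tp Wmix true y).
Proof.
move=> g00; rewrite !sum_pair.
rewrite (sum_nonnull_columns
  (F := fun j => \sum_y g (tp Wmix false (j, y)) (tp Wmix true (j, y)))) //.
by move=> j j_null; apply: big1 => y _; rewrite !tp_Wmix_null.
Qed.

Lemma Wmat_symmetric : Defs.symmetric (Wmat sigma k).
Proof.
exists (fun y => (y.1, ~~ y.2)); split; first by case=> js b /=; rewrite negbK.
by case=> js [].
Qed.

Lemma Wmix_degraded_Wmat : degraded Wmix (Wmat sigma k).
Proof.
exists (fun y y' => ((val y.1 == y'.1) && (y.2 == y'.2))%:R); split; [|split].
- by move=> y y'; rewrite ler0n.
- move=> [js b]; rewrite sum_pair (bigD1 (val js)) //= eqxx [X in _ + X]big1 => [|j].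
    by rewrite addr0 big_bool; case: b; rewrite /= ?addr0 ?add0r.
  by rewrite eq_sym => /negbTE j_neq; apply: big1 => y _; rewrite j_neq.
- move=> a [j b]; rewrite sum_pair.
  rewrite (sum_nonnull_columns
    (F := fun j' => \sum_y tp Wmix a (j', y) * ((j' == j) && (y == b))%:R)).
    rewrite (bigD1 j) //= eqxx [X in _ + X]big1 => [|j' /negbTE j'_neq].
      by rewrite addr0 big_bool; case: b; rewrite /= ?mulr1 ?mulr0 ?addr0 ?add0r.
    by apply: big1 => y _; rewrite j'_neq mulr0.
  by move=> j' j'_null; apply: big1 => y _; rewrite tp_Wmix_null ?mul0r.
Qed.

Variable q : 'I_m -> R.
Hypothesis q_prob : prob_vec q.
Hypothesis k_row : forall i, \sum_j k i j = q i.

Lemma colsum_prob_vec : prob_vec (colsum k).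
Proof.
split; first exact: colsum_ge0.
by rewrite /colsum exchange_big /= -(proj2 q_prob); apply: eq_bigr => i _; exact: k_row.
Qed.

Lemma Wmix_valid : valid Wmix.
Proof. exact: bsc_mix_valid colsum_prob_vec colcross_bounds. Qed.

Lemma Wmat_valid : valid (Wmat sigma k).
Proof.
have [Wmix_ge0 Wmix_sum] := Wmix_valid.
split; first by move=> x [js y]; exact: Wmix_ge0 x (val js, y).
move=> x; rewrite -(Wmix_sum x).
by have := sum_Wmat (g := fun u v => if x then v else u); case: x; apply.
Qed.

Lemma Wmat_in_B : in_B n (Wmat sigma k).
Proof.
exists (colsum k), colcross; split; first exact: colsum_prob_vec.
split => [|e _]; first exact: colcross_bounds.
rewrite /lr_profile big_mkcond [RHS]big_mkcond /=.
apply: (sum_Wmat (g := fun u v => if u * (1 - e) == e * v then (u + v) / 2 else 0)).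
by rewrite add0r !mul0r; case: ifP.
Qed.

Lemma Wmat_degraded_Wmix : degraded (Wmat sigma k) Wmix.
Proof.
(* An empty column of [Wmix] is never output; its row is [colsum k] only to keep
   the channel stochastic. *)
pose c j j' := if 0 < colsum k j then (j == j')%:R else colsum k j'.
have sum_c j : \sum_(js : {j' | 0 < colsum k j'}) c j (val js) = 1.
  rewrite /c; case: (boolP (0 < colsum k j)) => [cs_pos|_]; last first.
    by rewrite (sum_nonnull_columns (F := colsum k)) //; exact: (proj2 colsum_prob_vec).
  rewrite (sum_nonnull_columns (F := fun j' => (j == j')%:R)) => [|j' j'_null].
    by rewrite (bigD1 j) //= eqxx big1 ?addr0 // => j' /negbTE; rewrite eq_sym => ->.
  by case: eqP => // j_eq; move: cs_pos; rewrite j_eq j'_null ltxx.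
exists (fun y y' => (y.2 == y'.2)%:R * c y.1 (val y'.1)); split; [|split].
- move=> [j b] [js b'] /=; rewrite mulr_ge0 ?ler0n // /c.
  by case: ifP; rewrite ?ler0n ?colsum_ge0.
- move=> [j b]; rewrite sum_pair -[RHS](sum_c j); apply: eq_bigr => js _.
  by rewrite big_bool; case: b; rewrite /= mul1r mul0r ?addr0 ?add0r.
- move=> a [js b]; rewrite sum_pair /=.
  rewrite (bigD1 (val js)) //= [X in _ + X]big1 => [|j /negbTE j_neq].
    rewrite addr0 big_bool /c (valP js) eqxx.
    by case: b; rewrite /= ?mulr1 ?mulr0 ?addr0 ?add0r.
  rewrite big_bool /= /c; case: ifP => [_|/negbT]; first by rewrite j_neq !mulr0 addr0.
  rewrite lt_def colsum_ge0 andbT negbK => /eqP j_null.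
  by rewrite j_null !mul0r addr0.
Qed.

Lemma Wmix_degraded_Q : degraded Wmix (bsc_mix q sigma).
Proof.
apply: bsc_mix_merge k_ge0 k_row _ _ => //; first exact: colsum_prob_vec.
by move=> j; rewrite colsum_mul_colcross.
Qed.

End MergedColumns.

Lemma balanced_columns_le (R : realFieldType) (A B SA SB P1 P2 e1 e2 : R) :
  0 <= SA <= A -> 0 <= SB <= B -> 0 < P1 -> 0 < P2 ->
  A + B = P1 + P2 -> SA + SB = P1 * e1 + P2 * e2 ->
  SA <= A * e2 -> B * e1 <= SB -> A * SB = B * SA -> e1 <= e2.
Proof.
move=> /andP[SA_ge0 SA_le] /andP[SB_ge0 SB_le] P1_gt0 P2_gt0 mass err a2 b1 D0.
have [A0|A_neq0] := eqVneq A 0.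
  have SA0 : SA = 0 by apply/le_anti; rewrite SA_ge0 -A0 SA_le.
  have hB : B = P1 + P2 by rewrite -mass A0 add0r.
  rewrite hB in b1; nra.
have [B0|B_neq0] := eqVneq B 0.
  have SB0 : SB = 0 by apply/le_anti; rewrite SB_ge0 -B0 SB_le.
  have hA : A = P1 + P2 by rewrite -mass B0 addr0.
  rewrite hA in a2; nra.
have A_gt0 : 0 < A by rewrite lt_def A_neq0 (le_trans SA_ge0 SA_le).
have B_gt0 : 0 < B by rewrite lt_def B_neq0 (le_trans SB_ge0 SB_le).
have AB_gt0 := mulr_gt0 A_gt0 B_gt0.
nra.
Qed.

(* [Fij] is the mass of source component i (weight A or B, error mass SA or SB)
   merged into target component j (weight Pj, crossover ej). *)
Definition two_column_plan (R : realFieldType) (A B SA SB P1 P2 e1 e2 : R) : Prop :=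
  exists F11 F12 F21 F22 : R,
    [/\ [/\ 0 <= F11, 0 <= F12, 0 <= F21 & 0 <= F22],
        [/\ F11 + F12 = A, F21 + F22 = B, F11 + F21 = P1 & F12 + F22 = P2] &
        F11 * (A^-1 * SA) + F21 * (B^-1 * SB) = P1 * e1 /\
        F12 * (A^-1 * SA) + F22 * (B^-1 * SB) = P2 * e2].

Section TwoColumnPlan.
Variables (R : realFieldType) (A B SA SB P1 P2 e1 e2 : R).
Hypotheses (SA_bounds : 0 <= SA <= A) (SB_bounds : 0 <= SB <= B).
Hypotheses (P1_gt0 : 0 < P1) (P2_gt0 : 0 < P2).
Hypotheses (mass : A + B = P1 + P2) (err : SA + SB = P1 * e1 + P2 * e2).
Hypotheses (a1 : SA <= A * e1) (a2 : SA <= A * e2).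
Hypotheses (b1 : B * e1 <= SB) (b2 : B * e2 <= SB).

Lemma two_column_plan_balanced :
  A * SB = B * SA -> two_column_plan A B SA SB P1 P2 e1 e2.
Proof.
(* The source crossovers coincide (where defined), which forces e1 = e2: split proportionally. *)
move=> D0; have e12 : e1 = e2.
  apply/le_anti; rewrite (balanced_columns_le SA_bounds SB_bounds P1_gt0 P2_gt0) //=.
  by apply: (balanced_columns_le SA_bounds SB_bounds P2_gt0 P1_gt0);
    rewrite // ?[P2 + _]addrC ?[P2 * _ + _]addrC.
have S_neq0 : P1 + P2 != 0 by rewrite gt_eqF ?addr_gt0.
have merged x : A * x / (P1 + P2) * (A^-1 * SA) + B * x / (P1 + P2) * (B^-1 * SB) = x * e1.
  transitivity (x / (P1 + P2) * (A * (A^-1 * SA) + B * (B^-1 * SB))); first by ring.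
  by rewrite !mulVKf_le // err -e12; field.
exists (A * P1 / (P1 + P2)), (A * P2 / (P1 + P2)), (B * P1 / (P1 + P2)), (B * P2 / (P1 + P2)).
split; last by rewrite !merged -e12.
  case/andP: SA_bounds => SA_ge0 /(le_trans SA_ge0) A_ge0.
  case/andP: SB_bounds => SB_ge0 /(le_trans SB_ge0) B_ge0.
  by split; apply: divr_ge0; rewrite ?addr_ge0 ?mulr_ge0 // ltW.
have -> : B = P1 + P2 - A by rewrite -mass addrC addKr.
by split; field.
Qed.

Lemma two_column_plan_unbalanced :
  A * SB != B * SA -> two_column_plan A B SA SB P1 P2 e1 e2.
Proof.
rewrite -subr_eq0 => D_neq0.
case/andP: SA_bounds => SA_ge0 SA_le; case/andP: SB_bounds => SB_ge0 SB_le.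
have A_ge0 := le_trans SA_ge0 SA_le; have B_ge0 := le_trans SB_ge0 SB_le.
have D_gt0 : 0 < A * SB - B * SA.
  have := ler_wpM2l A_ge0 b1; have := ler_wpM2l B_ge0 a1.
  by rewrite lt_def D_neq0 /=; lra.
have A_neq0 : A != 0.
  apply: contraTneq D_gt0 => A0; have SA0 : SA = 0 by apply/le_anti; rewrite SA_ge0 -A0 SA_le.
  by rewrite A0 SA0 mul0r mulr0 subr0 ltxx.
have B_neq0 : B != 0.
  apply: contraTneq D_gt0 => B0; have SB0 : SB = 0 by apply/le_anti; rewrite SB_ge0 -B0 SB_le.
  by rewrite B0 SB0 mul0r mulr0 subr0 ltxx.
(* Target j takes the convex combination of the crossovers SA/A < SB/B equal to ej. *)
exists (P1 * A * (SB - B * e1) / (A * SB - B * SA)), (P2 * A * (SB - B * e2) / (A * SB - B * SA)),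
       (P1 * B * (A * e1 - SA) / (A * SB - B * SA)), (P2 * B * (A * e2 - SA) / (A * SB - B * SA)).
split; first by split; apply: divr_ge0 (ltW D_gt0); do 2?apply: mulr_ge0; rewrite ?subr_ge0 // ltW.
have hB : B = P1 + P2 - A by rewrite -mass addrC addKr.
have hSB : SB = P1 * e1 + P2 * e2 - SA by rewrite -err addrC addKr.
move: D_neq0 B_neq0; rewrite hB hSB => D_neq0 B_neq0.
all: by split; field; rewrite ?D_neq0 ?A_neq0 ?B_neq0.
Qed.

Lemma two_column_transport : two_column_plan A B SA SB P1 P2 e1 e2.
Proof.
have [D0|D_neq0] := eqVneq (A * SB) (B * SA).
  exact: two_column_plan_balanced.
exact: two_column_plan_unbalanced.
Qed.

End TwoColumnPlan.

Lemma two_column_merge (R : realType) n (a b : 'I_n) (p e w s : 'I_n -> R) :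
  a != b -> prob_vec p -> 0 < p a -> 0 < p b ->
  (forall j, 0 <= s j <= w j) ->
  (forall j, j != a -> j != b -> w j = p j /\ s j = p j * e j) ->
  w a + w b = p a + p b -> s a + s b = p a * e a + p b * e b ->
  s a <= w a * e a -> s a <= w a * e b -> w b * e a <= s b -> w b * e b <= s b ->
  degraded (bsc_mix p e) (bsc_mix w (fun j => (w j)^-1 * s j)).
Proof.
move=> ab p_prob pa_gt0 pb_gt0 s_bounds off_ab mass err a1 a2 b1 b2.
have ba : b != a by rewrite eq_sym.
have [F11 [F12 [F21 [F22 [[F11_ge0 F12_ge0 F21_ge0 F22_ge0]
    [row_a row_b col_a col_b] [err_a err_b]]]]]] :=
  two_column_transport (s_bounds a) (s_bounds b) pa_gt0 pb_gt0 mass err a1 a2 b1 b2.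
pose F i j := if i == a then (if j == a then F11 else if j == b then F12 else 0)
  else if i == b then (if j == a then F21 else if j == b then F22 else 0)
  else if i == j then w i else 0.
have F_col (v : 'I_n -> R) j : \sum_i F i j * v i =
    if j == a then F11 * v a + F21 * v b
    else if j == b then F12 * v a + F22 * v b else w j * v j.
  rewrite /F; case: (eqVneq j a) => [->|ja].
    by rewrite (sum_two_points ab) => [|i /negbTE-> /negbTE->]; rewrite ?eqxx ?(negbTE ba) ?mul0r.
  case: (eqVneq j b) => [->|jb].
    by rewrite (sum_two_points ab) => [|i /negbTE-> /negbTE->]; rewrite ?eqxx ?(negbTE ba) ?mul0r.
  rewrite (sum_one_point (a := j)) => [|i ij]; first by rewrite (negbTE ja) (negbTE jb) eqxx.
  by rewrite (negbTE ij) !if_same mul0r.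
have w_ge0 i : 0 <= w i by case/andP: (s_bounds i) => /le_trans; apply.
apply: (bsc_mix_merge (K := F)) => //.
- by move=> i j; rewrite /F; do !case: ifP.
- move=> i; rewrite /F; case: (eqVneq i a) => [->|ia].
    by rewrite (sum_two_points ab) => [|j /negbTE-> /negbTE->]; rewrite // !eqxx !(negbTE ba).
  case: (eqVneq i b) => [->|ib].
    by rewrite (sum_two_points ab) => [|j /negbTE-> /negbTE->]; rewrite // !eqxx !(negbTE ba).
  by rewrite (sum_one_point (a := i)) ?eqxx // => j; rewrite eq_sym => /negbTE->.
- move=> j; rewrite -(eq_bigr _ (fun i _ => mulr1 (F i j))) (F_col (fun=> 1)) !mulr1.
  case: eqP => [->|/eqP ja]//; case: eqP => [->|/eqP jb] //.
  by case: (off_ab j ja jb).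
- move=> j; rewrite F_col; case: eqP => [->|/eqP ja] //; case: eqP => [->|/eqP jb] //.
  by case: (off_ab j ja jb) => _ <-; exact/mulVKf_le.
Qed.

Section RowPerturbation.
Variables (R : realType) (m n : nat) (k k' : 'I_m -> 'I_n -> R).
Variables (i0 : 'I_m) (g : 'I_n -> R).
Hypothesis k'E : forall i j, k' i j = k i j + (if i == i0 then g j else 0).

Lemma perturbed_col_moment (w : 'I_m -> R) j :
  \sum_i k' i j * w i = \sum_i k i j * w i + g j * w i0.
Proof.
under eq_bigr do rewrite k'E mulrDl.
rewrite big_split /= [X in _ + X](sum_one_point (a := i0)) ?eqxx // => i /negbTE->.
by rewrite mul0r.
Qed.

Lemma perturbed_colsum j : colsum k' j = colsum k j + g j.
Proof.
rewrite /colsum; under eq_bigr do rewrite k'E.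
by rewrite big_split /= [X in _ + X](sum_one_point (a := i0)) ?eqxx // => i /negbTE->.
Qed.

Lemma perturbed_row_sum i : \sum_j g j = 0 -> \sum_j k' i j = \sum_j k i j.
Proof.
move=> g_sum; under eq_bigr do rewrite k'E.
by rewrite big_split /=; case: (i == i0); rewrite ?g_sum ?big1_eq addr0.
Qed.

End RowPerturbation.

Lemma move_entryE (R : realType) m n (k : 'I_m -> 'I_n -> R) i0 (a b : 'I_n) i j :
  a != b -> move_entry k i0 a b i j =
  k i j + (if i == i0 then k i0 a * ((j == b)%:R - (j == a)%:R) else 0).
Proof.
move=> ab; rewrite /move_entry; case: (eqVneq i i0) => [->|_] /=; last by rewrite addr0.
case: (eqVneq j a) => [->|ja]; first by rewrite (negbTE ab) /=; ring.
by case: (eqVneq j b) => [->|jb] /=; ring.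
Qed.

Lemma swap_entriesE (R : realType) m n (k : 'I_m -> 'I_n -> R) d ilo ihi jlo jhi i j :
  swap_entries k d ilo ihi jlo jhi i j =
  k i j + (if i == ilo then d * ((j == jlo)%:R - (j == jhi)%:R) else 0)
        + (if i == ihi then d * ((j == jhi)%:R - (j == jlo)%:R) else 0).
Proof.
rewrite /swap_entries.
by case: (i == ilo); case: (i == ihi); case: (j == jlo); case: (j == jhi) => /=; ring.
Qed.

Section EntryMoves.
Variables (R : realType) (m n : nat) (k : 'I_m -> 'I_n -> R).
Hypothesis k_ge0 : forall i j, 0 <= k i j.

Lemma move_entry_ge0 i0 (a b : 'I_n) : forall i j, 0 <= move_entry k i0 a b i j.
Proof. by move=> i j; rewrite /move_entry; do 2?case: ifP => _; rewrite ?addr_ge0. Qed.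

Lemma swap_entries_ge0 d ilo ihi (jlo jhi : 'I_n) :
  0 <= d -> d <= k ilo jhi -> d <= k ihi jlo -> ilo != ihi -> jlo != jhi ->
  forall i j, 0 <= swap_entries k d ilo ihi jlo jhi i j.
Proof.
move=> d_ge0 d_le_lohi d_le_hilo i_ne j_ne i j; rewrite /swap_entries.
have [->|_] := eqVneq i ilo.
  rewrite (negbTE i_ne) /= !subr0 addr0; have [->|_] := eqVneq j jhi.
    by rewrite eq_sym (negbTE j_ne) addr0 subr_ge0.
  by rewrite subr0; case: ifP; rewrite ?addr0 ?addr_ge0.
have [->|_] := eqVneq i ihi; last by rewrite /= !subr0 !addr0.
rewrite /= !subr0 !addr0; have [->|_] := eqVneq j jlo.
  by rewrite (negbTE j_ne) addr0 subr_ge0.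
by rewrite subr0; case: ifP; rewrite ?addr0 ?addr_ge0.
Qed.

End EntryMoves.

Section OneMatrix.
Variables (R : realType) (m n : nat) (q sigma : 'I_m -> R) (p eps : 'I_n -> R).
Variable k : 'I_m -> 'I_n -> R.
Hypothesis q_prob : prob_vec q.
Hypothesis sigma01 : forall i, 0 <= sigma i <= 1.
Hypothesis p_prob : prob_vec p.
Hypothesis p_gt0 : forall j, 0 < p j.
Hypothesis W_Pdeg_Q : Pdeg n (bsc_mix p eps) (bsc_mix q sigma).

Lemma Pdeg_two_column_change (k' : 'I_m -> 'I_n -> R) (a b : 'I_n) :
  a != b -> (forall i j, 0 <= k' i j) -> (forall i, \sum_j k' i j = q i) ->
  (forall j, j != a -> j != b ->
     colsum k' j = p j /\ colerr sigma k' j = p j * eps j) ->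
  colsum k' a + colsum k' b = p a + p b ->
  colerr sigma k' a + colerr sigma k' b = p a * eps a + p b * eps b ->
  colerr sigma k' a <= colsum k' a * eps a ->
  colerr sigma k' a <= colsum k' a * eps b ->
  colsum k' b * eps a <= colerr sigma k' b ->
  colsum k' b * eps b <= colerr sigma k' b ->
  Pdeg n (bsc_mix p eps) (Wmat sigma k') /\ Pdeg n (Wmat sigma k') (bsc_mix q sigma).
Proof.
move=> ab k'_ge0 k'_row off_ab mass err a1 a2 b1 b2.
apply: Pdeg_intermediate => //.
- exact: (Wmat_valid sigma01 k'_ge0 q_prob k'_row).
- exact: Wmat_symmetric.
- exact: (Wmat_in_B sigma01 k'_ge0 q_prob k'_row).
- apply: degraded_trans (Wmat_degraded_Wmix sigma k'_ge0 q_prob k'_row) _.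
  exact: (Wmix_degraded_Q sigma01 k'_ge0 q_prob k'_row).
- apply: degraded_trans _ (Wmix_degraded_Wmat sigma k'_ge0).
  exact: two_column_merge ab p_prob (p_gt0 a) (p_gt0 b) (colerr_bounds sigma01 k'_ge0)
    off_ab mass err a1 a2 b1 b2.
Qed.

Hypothesis k_ge0 : forall i j, 0 <= k i j.
Hypothesis k_row : forall i, \sum_j k i j = q i.
Hypothesis k_col : forall j, \sum_i k i j = p j.
Hypothesis k_err : forall j, \sum_i k i j * sigma i = p j * eps j.

Lemma Pdeg_move_entry (i0 : 'I_m) (a b : 'I_n) :
  a != b -> (eps a <= eps b <= sigma i0) \/ (sigma i0 <= eps b <= eps a) ->
  let k' := move_entry k i0 a b in
  Pdeg n (bsc_mix p eps) (Wmat sigma k') /\ Pdeg n (Wmat sigma k') (bsc_mix q sigma).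
Proof.
move=> ab between k'; pose c := k i0 a; pose g (j : 'I_n) := c * ((j == b)%:R - (j == a)%:R).
have k'E i j : k' i j = k i j + (if i == i0 then g j else 0) := move_entryE k i0 i j ab.
have cs j : colsum k' j = p j + g j by rewrite (perturbed_colsum k'E) -k_col.
have ce j : colerr sigma k' j = p j * eps j + g j * sigma i0.
  by rewrite /colerr (perturbed_col_moment k'E) k_err.
have k'_row i : \sum_j k' i j = q i by rewrite (perturbed_row_sum k'E) ?sum_delta_sub.
have off_ab j : j != a -> j != b -> colsum k' j = p j /\ colerr sigma k' j = p j * eps j.
  by move=> /negbTE ja /negbTE jb; rewrite cs ce /g ja jb subrr mulr0 mul0r !addr0.
have [ga gb] : g a = - c /\ g b = c.
  by rewrite /g !eqxx (negbTE ab) eq_sym (negbTE ab) /=; split; ring.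
have c_ge0 : 0 <= c := k_ge0 i0 a.
have p_ge0 j : 0 <= p j := ltW (p_gt0 j).
case: between => /andP[e1 e2].
- have c_e : 0 <= c * (eps b - eps a) by rewrite mulr_ge0 ?subr_ge0.
  have c_s : 0 <= c * (sigma i0 - eps b) by rewrite mulr_ge0 ?subr_ge0.
  have pa_e : 0 <= p a * (eps b - eps a) by rewrite mulr_ge0 ?subr_ge0.
  have pb_e : 0 <= p b * (eps b - eps a) by rewrite mulr_ge0 ?subr_ge0.
  apply: (Pdeg_two_column_change ab (move_entry_ge0 k_ge0 i0 a b)) => //;
    rewrite ?cs ?ce ?ga ?gb; [ring|ring|lra..].
- have c_e : 0 <= c * (eps a - eps b) by rewrite mulr_ge0 ?subr_ge0.
  have c_s : 0 <= c * (eps b - sigma i0) by rewrite mulr_ge0 ?subr_ge0.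
  have pa_e : 0 <= p a * (eps a - eps b) by rewrite mulr_ge0 ?subr_ge0.
  have pb_e : 0 <= p b * (eps a - eps b) by rewrite mulr_ge0 ?subr_ge0.
  apply: (Pdeg_two_column_change (a := b) (b := a) _ (move_entry_ge0 k_ge0 i0 a b)) => //;
    rewrite ?cs ?ce ?ga ?gb;
      [by rewrite eq_sym | by move=> j jb ja; exact: off_ab | ring | ring | lra..].
Qed.

Lemma Pdeg_swap_entries (ilo ihi : 'I_m) (jlo jhi : 'I_n) (d : R) :
  0 <= d -> d <= k ilo jhi -> d <= k ihi jlo ->
  eps jlo <= sigma ilo -> sigma ilo < sigma ihi -> sigma ihi <= eps jhi ->
  let k' := swap_entries k d ilo ihi jlo jhi in
  Pdeg n (bsc_mix p eps) (Wmat sigma k') /\ Pdeg n (Wmat sigma k') (bsc_mix q sigma).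
Proof.
move=> d_ge0 d_le_lohi d_le_hilo lo_lo lo_hi hi_hi k'.
have i_ne : ilo != ihi by apply: contraTneq lo_hi => ->; rewrite ltxx.
have j_ne : jlo != jhi.
  by apply: contraTneq lo_hi => j_eq; rewrite -leNgt (le_trans hi_hi) // -j_eq.
pose g1 (j : 'I_n) := d * ((j == jlo)%:R - (j == jhi)%:R).
pose g2 (j : 'I_n) := d * ((j == jhi)%:R - (j == jlo)%:R).
pose k1 i j := k i j + (if i == ilo then g1 j else 0).
have k'E i j : k' i j = k1 i j + (if i == ihi then g2 j else 0).
  by rewrite /k' swap_entriesE.
have cs j : colsum k' j = p j.
  rewrite (perturbed_colsum k'E) (@perturbed_colsum _ _ _ k k1 ilo g1) // -k_col.
  by rewrite -addrA (_ : g1 j + g2 j = 0) ?addr0 // /g1 /g2; ring.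
have ce j : colerr sigma k' j = p j * eps j + g1 j * sigma ilo + g2 j * sigma ihi.
  rewrite /colerr (perturbed_col_moment k'E).
  by rewrite (@perturbed_col_moment _ _ _ k k1 ilo g1) // k_err.
have k'_row i : \sum_j k' i j = q i.
  rewrite (perturbed_row_sum k'E) ?sum_delta_sub //.
  by rewrite (@perturbed_row_sum _ _ _ k k1 ilo g1) ?sum_delta_sub.
have off_ab j : j != jlo -> j != jhi -> colsum k' j = p j /\ colerr sigma k' j = p j * eps j.
  by move=> /negbTE ja /negbTE jb; rewrite cs ce /g1 /g2 ja jb subrr mulr0 !mul0r !addr0.
have [g1lo g1hi g2lo g2hi] : [/\ g1 jlo = d, g1 jhi = - d, g2 jlo = - d & g2 jhi = d].
  by rewrite /g1 /g2 !eqxx (negbTE j_ne) eq_sym (negbTE j_ne) /=; split; ring.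
have eps_le : eps jlo <= eps jhi by rewrite (le_trans lo_lo) // (le_trans (ltW lo_hi)).
have d_s : 0 <= d * (sigma ihi - sigma ilo) by rewrite mulr_ge0 // subr_ge0 ltW.
have plo_e : 0 <= p jlo * (eps jhi - eps jlo) by rewrite mulr_ge0 ?subr_ge0 // ltW.
have phi_e : 0 <= p jhi * (eps jhi - eps jlo) by rewrite mulr_ge0 ?subr_ge0 // ltW.
have k'_ge0 := swap_entries_ge0 k_ge0 d_ge0 d_le_lohi d_le_hilo i_ne j_ne.
apply: (Pdeg_two_column_change j_ne k'_ge0) => //;
  rewrite ?cs ?ce ?g1lo ?g1hi ?g2lo ?g2hi; [ring|lra..].
Qed.

End OneMatrix.

Theorem lemma6 (R : realType) (m n : nat) (q sigma : 'I_m -> R)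
  (p eps : 'I_n -> R) (k : 'I_m -> 'I_n -> R) :
  (0 < m)%N -> (0 < n)%N ->
  prob_vec q ->
  (forall i, 0 <= sigma i) -> (forall i, sigma i <= 1 / 2) ->
  (forall i1 i2 : 'I_m, (i1 < i2)%N -> sigma i1 < sigma i2) ->
  prob_vec p -> (forall j, 0 < p j) -> (forall j, 0 <= eps j <= 1) ->
  Pdeg n (bsc_mix p eps) (bsc_mix q sigma) ->
  (forall (i : 'I_m) (j : 'I_n), val i = 0%N -> val j = 0%N -> sigma i <= eps j) ->
  (forall j1 j2 : 'I_n, (j1 <= j2)%N -> eps j1 <= eps j2) ->
  (forall (i : 'I_m) (j : 'I_n), val i = m.-1 -> val j = n.-1 -> eps j <= sigma i) ->
  (* (k_ij) is a 1-matrix of pattern (q;p) *)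
  (forall i j, 0 <= k i j) ->
  (forall i, \sum_j k i j = q i) ->
  (forall j, \sum_i k i j = p j) ->
  (forall j, \sum_i k i j * sigma i = p j * eps j) ->
  let W := bsc_mix p eps in
  let Q := bsc_mix q sigma in
  [/\
   (* part 1 *)
   (forall (i' : 'I_m) (j' j1 : 'I_n), val j1 = (val j').+1 ->
      k i' j' != 0 -> eps j1 <= sigma i' ->
      let W' := Wmat sigma (move_entry k i' j' j1) in
      Pdeg n W W' /\ Pdeg n W' Q),
   (* part 2 *)
   (forall (i'' : 'I_m) (j'' j0 : 'I_n), val j'' = (val j0).+1 ->
      k i'' j'' != 0 -> sigma i'' <= eps j0 ->
      let W'' := Wmat sigma (move_entry k i'' j'' j0) in
      Pdeg n W W'' /\ Pdeg n W'' Q) &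
   (* part 3 *)
   (forall (ilo ihi : 'I_m) (jlo jhi : 'I_n),
      k ilo jhi * k ihi jlo != 0 ->
      eps jlo <= sigma ilo -> sigma ilo < sigma ihi -> sigma ihi <= eps jhi ->
      let d := Num.min (k ilo jhi) (k ihi jlo) in
      let Ws := Wmat sigma (swap_entries k d ilo ihi jlo jhi) in
      Pdeg n W Ws /\ Pdeg n Ws Q)].
Proof.
move=> _ _ q_prob sigma_ge0 sigma_le_half _ p_prob p_gt0 _ W_Pdeg_Q _ eps_mono _
  k_ge0 k_row k_col k_err W Q.
have sigma01 i : 0 <= sigma i <= 1.
  by rewrite sigma_ge0 (le_trans (sigma_le_half i)) // ler_pdivrMr ?mul1r ?ler1n.
have move_Pdeg := Pdeg_move_entry q_prob sigma01 p_prob p_gt0 W_Pdeg_Q k_ge0 k_row k_col k_err.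
split.
- move=> i j j1 j1E _ eps_le; apply: move_Pdeg; first by rewrite -val_eqE j1E neq_ltn ltnSn.
  by left; rewrite eps_le eps_mono // j1E.
- move=> i j j0 jE _ eps_ge; apply: move_Pdeg; first by rewrite -val_eqE jE neq_ltn ltnSn orbT.
  by right; rewrite eps_ge eps_mono // jE.
- move=> ilo ihi jlo jhi _ lo_lo lo_hi hi_hi d.
  apply: (Pdeg_swap_entries q_prob sigma01 p_prob p_gt0 W_Pdeg_Q k_ge0 k_row k_col k_err) => //.
  + by rewrite le_min !k_ge0.
  + by rewrite ge_min lexx.
  + by rewrite ge_min lexx orbT.
Qed.
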